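(* Let $G\in\mathcal{C}$ and let $C$ be a minimal separator of $G$ that is not a clique. Then $G\setminus C$ has exactly two full components for $C$.
   Context: All graphs are finite and simple; paths are induced paths; a hole is an induced cycle of length at least four. $\mathcal{C}$ is the class of graphs containing no theta, pyramid, prism or turtle as an induced subgraph, where: a theta consists of two nonadjacent vertices $a,b$ and three paths from $a$ to $b$, otherwise vertex-disjoint, any two of which induce a hole; a pyramid consists of a vertex $a$, a triangle $\{b_1,b_2,b_3\}$ and paths $P_i$ from $a$ to $b_i$, pairwise disjoint except at $a$, any two of which induce a hole; a prism consists of two disjoint triangles $\{a_1,a_2,a_3\},\{b_1,b_2,b_3\}$ and pairwise disjoint paths $P_i$ from $a_i$ to $b_i$, any two of which induce a hole; a turtle consists of disjoint paths $P_1$ (from $a_1$ to $b_1$), $P_2$ (from $a_2$ to $b_2$) with $a_1a_2,b_1b_2$ edges and $V(P_1)\cup V(P_2)$ inducing a hole, plus adjacent vertices $x,y$ where $x$ has at least three neighbors in $P_1$ and none in $P_2$, and $y$ has at least three neighbors in $P_2$ and none in $P_1$. A set $C\subseteq V(G)$ is a minimal separator of $G$ if there are two distinct connected components $L,R$ of $G\setminus C$ with $N(L)=N(R)=C$, where $N(X)$ is the set of vertices outside $X$ with a neighbor in $X$. A connected component $D$ of $G\setminus C$ is a full component for $C$ if $N(D)=C$. *)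

(* A finite simple graph is a symmetric irreflexive relation
   g : rel T on a finType T (the hypotheses are stated in the theorem). *)
From mathcomp Require Import all_boot.
Set Implicit Arguments.
Unset Strict Implicit.
Unset Printing Implicit Defensive.

Section Graphs.
Variables (T : finType) (g : rel T).

Definition V (p : seq T) : {set T} := [set x in p].

Definition ipath (p : seq T) : Prop :=
  uniq p /\
  forall (x0 : T) (i j : nat), i < size p -> j < size p ->
    g (nth x0 p i) (nth x0 p j) = (i == j.+1) || (j == i.+1).

Definition path_from (a b : T) (p : seq T) : Prop :=
  ipath p /\ p != [::] /\ head a p = a /\ last a p = b.

Definition hole (c : seq T) : Prop :=
  uniq c /\ 4 <= size c /\
  forall (x0 : T) (i j : nat), i < size c -> j < size c ->
    g (nth x0 c i) (nth x0 c j) =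
      (i == j.+1 %% size c) || (j == i.+1 %% size c).

Definition induces_hole (S : {set T}) : Prop :=
  exists c, hole c /\ V c = S.

Definition has_theta : Prop :=
  exists (a b : T) (P1 P2 P3 : seq T),
    a != b /\ ~~ g a b /\
    path_from a b P1 /\ path_from a b P2 /\ path_from a b P3 /\
    V P1 :&: V P2 = [set a; b] /\ V P1 :&: V P3 = [set a; b] /\
    V P2 :&: V P3 = [set a; b] /\
    induces_hole (V P1 :|: V P2) /\ induces_hole (V P1 :|: V P3) /\
    induces_hole (V P2 :|: V P3).

Definition has_pyramid : Prop :=
  exists (a b1 b2 b3 : T) (P1 P2 P3 : seq T),
    g b1 b2 /\ g b2 b3 /\ g b1 b3 /\
    path_from a b1 P1 /\ path_from a b2 P2 /\ path_from a b3 P3 /\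
    V P1 :&: V P2 = [set a] /\ V P1 :&: V P3 = [set a] /\
    V P2 :&: V P3 = [set a] /\
    induces_hole (V P1 :|: V P2) /\ induces_hole (V P1 :|: V P3) /\
    induces_hole (V P2 :|: V P3).

Definition has_prism : Prop :=
  exists (a1 a2 a3 b1 b2 b3 : T) (P1 P2 P3 : seq T),
    g a1 a2 /\ g a2 a3 /\ g a1 a3 /\
    g b1 b2 /\ g b2 b3 /\ g b1 b3 /\
    [set a1; a2; a3] :&: [set b1; b2; b3] = set0 /\
    path_from a1 b1 P1 /\ path_from a2 b2 P2 /\ path_from a3 b3 P3 /\
    [disjoint V P1 & V P2] /\ [disjoint V P1 & V P3] /\
    [disjoint V P2 & V P3] /\
    induces_hole (V P1 :|: V P2) /\ induces_hole (V P1 :|: V P3) /\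
    induces_hole (V P2 :|: V P3).

Definition has_turtle : Prop :=
  exists (a1 b1 a2 b2 x y : T) (P1 P2 : seq T),
    path_from a1 b1 P1 /\ path_from a2 b2 P2 /\
    [disjoint V P1 & V P2] /\ g a1 a2 /\ g b1 b2 /\
    induces_hole (V P1 :|: V P2) /\
    x \notin V P1 :|: V P2 /\ y \notin V P1 :|: V P2 /\ g x y /\
    3 <= #|[set v in V P1 | g x v]| /\ [set v in V P2 | g x v] = set0 /\
    3 <= #|[set v in V P2 | g y v]| /\ [set v in V P1 | g y v] = set0.

Definition in_class_C : Prop :=
  ~ has_theta /\ ~ has_pyramid /\ ~ has_prism /\ ~ has_turtle.

Definition nbh (X : {set T}) : {set T} :=
  [set v | (v \notin X) && [exists u in X, g u v]].

Definition rel_minus (C : {set T}) : rel T :=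
  [rel x y | g x y && (x \notin C) && (y \notin C)].

Definition is_component (C D : {set T}) : Prop :=
  exists v, v \notin C /\ D = [set u | connect (rel_minus C) v u].

Definition is_full_component (C D : {set T}) : Prop :=
  is_component C D /\ nbh D = C.

Definition minimal_separator (C : {set T}) : Prop :=
  exists L R : {set T}, L != R /\ is_component C L /\ is_component C R /\
    nbh L = C /\ nbh R = C.

Definition clique (C : {set T}) : Prop :=
  forall x y, x \in C -> y \in C -> x != y -> g x y.

End Graphs.

(* C is a minimal separator, so it has two distinct full components L
   and R, and it suffices to show that there is no third one D.  Pick two
   nonadjacent vertices x, y of C.  For every full component D, a shortest
   walk from x to y through D is an induced path x - A - y whose interior A
   is a nonempty subset of D.  Two such paths through distinct components
   meet only in {x, y} and have no edges between their interiors, so their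
   union is a hole.  Three full components would therefore give a theta with
   ends x and y, which graphs in C do not contain. *)

From mathcomp Require Import all_boot.
From Stdlib Require Import Classical Wf_nat.
Set Implicit Arguments.
Unset Strict Implicit.
Unset Printing Implicit Defensive.

Lemma ex_minimal (A : Type) (P : A -> Prop) (m : A -> nat) (a : A) :
  P a -> exists2 b, P b & forall c, P c -> m b <= m c.
Proof.
move=> Pa.
have [n [[[b Pb <-] b_min] _]] := @dec_inh_nat_subset_has_unique_least_element
  (fun n => exists2 b, P b & m b = n) (fun n => classic _)
  (ex_intro _ _ (ex_intro2 _ _ a Pa erefl)).
by exists b => // c Pc; apply/leP/b_min; exists c.
Qed.

Section Steps.
Variable T : eqType.
Implicit Types (x y u v : T) (p s : seq T).

Definition steps x p : seq (T * T) := pairmap pair x p.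

Definition linked x p u v := ((u, v) \in steps x p) || ((v, u) \in steps x p).

Lemma stepsP x p u v :
  reflect (exists2 i, i < size p & (nth x (x :: p) i, nth x (x :: p) i.+1) = (u, v))
          ((u, v) \in steps x p).
Proof.
apply: (iffP (nthP (x, x))) => -[i ip <-]; rewrite size_pairmap in ip *;
  by exists i => //; rewrite (nth_pairmap x).
Qed.

Lemma linked_mem x p u v : linked x p u v -> (u \in x :: p) && (v \in x :: p).
Proof.
have mem_step a b : (a, b) \in steps x p -> (a \in x :: p) && (b \in x :: p).
  case/stepsP=> i ip [<- <-].
  by rewrite -[nth x p i]/(nth x (x :: p) i.+1) !mem_nth //= ltnW.
by case/orP=> /mem_step //; rewrite andbC.
Qed.

Lemma path_linked (e : rel T) x p u v :
  symmetric e -> path e x p -> linked x p u v -> e u v.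
Proof.
move=> e_sym; have step_e a b : path e x p -> (a, b) \in steps x p -> e a b.
  elim: p x => //= c p IH x /andP[xc cp].
  by rewrite inE => /orP[/eqP[-> ->] // | /(IH _ cp)].
by move=> walk /orP[] /(step_e _ _ walk); rewrite // e_sym.
Qed.

Lemma steps_consec x p s1 a b s3 : x :: p = s1 ++ a :: b :: s3 -> (a, b) \in steps x p.
Proof.
move=> E; apply/stepsP; exists (size s1).
  by rewrite -ltnS -/(size (x :: p)) E size_cat /= !addnS !ltnS leq_addr.
by rewrite E !nth_cat ltnn ltnNge leqnSn subnn subSnn.
Qed.

Lemma steps_rcons x p z : steps x (rcons p z) = rcons (steps x p) (last x p, z).
Proof. by rewrite /steps -!cats1 pairmap_cat. Qed.

Lemma mem_steps_rev x y s u v :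
  ((u, v) \in steps y (rcons (rev s) x)) = ((v, u) \in steps x (rcons s y)).
Proof.
elim: s x => [|a s IH] x; first by rewrite !mem_seq1 !xpair_eqE andbC.
by rewrite rev_cons steps_rcons mem_rcons inE last_rcons IH /= inE !xpair_eqE andbC.
Qed.

Lemma steps_nth x p i j : uniq (x :: p) -> i < size (x :: p) -> j < size (x :: p) ->
  ((nth x (x :: p) i, nth x (x :: p) j) \in steps x p) = (j == i.+1).
Proof.
move=> U ip jp; apply/stepsP/eqP => [[k kp [Ei Ej]] | ji]; last by subst j; exists i.
  have kp' : k < size (x :: p) by rewrite ltnW.
  move/eqP: Ei; rewrite nth_uniq // => /eqP Eki; subst k.
  by move/eqP: Ej; rewrite -[nth x p i]/(nth x (x :: p) i.+1) nth_uniq // => /eqP.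
Qed.

Lemma steps_cycle_nth x p i j : uniq (x :: p) ->
  i < size (x :: p) -> j < size (x :: p) ->
  ((nth x (x :: p) i, nth x (x :: p) j) \in steps x (rcons p x)) =
  (j == i.+1 %% size (x :: p)).
Proof.
set c := x :: p => U ip jp.
have wrap k : k < size c -> nth x (rcons c x) k.+1 = nth x c (k.+1 %% size c).
  move=> kc; rewrite nth_rcons; have [k1c|k1c] := ltnP k.+1 (size c).
    by rewrite modn_small.
  have -> : k.+1 = size c by apply/eqP; rewrite eqn_leq kc k1c.
  by rewrite eqxx modnn.
apply/stepsP/eqP => [[k kp [Ei Ej]] | ->].
  rewrite size_rcons in kp.
  move: Ei Ej; rewrite -[nth x (rcons p x) k]/(nth x (rcons c x) k.+1) wrap //.
  rewrite -[x :: rcons p x]/(rcons c x) nth_rcons kp.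
  move/eqP; rewrite nth_uniq // => /eqP <- /eqP.
  by rewrite nth_uniq ?ltn_pmod // => /eqP.
exists i; first by rewrite size_rcons.
by rewrite -[x :: rcons p x]/(rcons c x) nth_rcons ip wrap.
Qed.

Lemma mem_xy x y s z : (z \in x :: rcons s y) = [|| z == x, z == y | z \in s].
Proof. by rewrite inE mem_rcons inE. Qed.

Lemma uniq_xy x y s :
  uniq (x :: rcons s y) = [&& x != y, x \notin s, y \notin s & uniq s].
Proof. by rewrite /= rcons_uniq mem_rcons inE negb_or -!andbA. Qed.

Lemma not_uniq_split s : ~~ uniq s -> exists s1 a s2 s3, s = s1 ++ a :: s2 ++ a :: s3.
Proof.
elim: s => [|b s IH] //=; rewrite negb_and negbK => /orP[bs|/IH[s1 [a [s2 [s3 ->]]]]].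
  by case/splitPr: bs => s2 s3; exists [::], b, s2, s3.
by exists (b :: s1), a, s2, s3.
Qed.

Lemma split2 s u v : u \in s -> v \in s -> u != v ->
  exists s1 s2 s3, s = s1 ++ u :: s2 ++ v :: s3 \/ s = s1 ++ v :: s2 ++ u :: s3.
Proof.
move=> us vs uv; move: vs; case/splitPr: us => s1 s2.
rewrite mem_cat inE => /or3P[/splitPr[t1 t2] | /eqP vu | /splitPr[t1 t2]].
- by exists t1, t2, s2; right; rewrite -catA.
- by rewrite vu eqxx in uv.
- by exists s1, t1, t2; left.
Qed.

End Steps.

Definition chordless (T : eqType) (e : rel T) (x : T) (p : seq T) :=
  uniq (x :: p) /\ {in x :: p &, e =2 linked x p}.

Section ShortestWalk.
Variables (T : eqType) (e : rel T).
Hypotheses (e_sym : symmetric e) (e_irr : irreflexive e).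

Lemma shortcut x p s1 a t t' :
  x :: p = s1 ++ a :: t -> path e x p -> (path e a t -> path e a t') ->
  last a t' = last a t -> {subset t' <= t} -> size t' < size t ->
  exists p', [/\ path e x p', last x p' = last x p, {subset p' <= p} & size p' < size p].
Proof.
case: s1 => [|b s1] [-> ->] walk tail tail_last tail_sub tail_size.
  by exists t'; split=> //; apply: tail.
move: walk; rewrite cat_path /= => /and3P[w1 w2 /tail w3].
exists (s1 ++ a :: t'); split.
- by rewrite cat_path /= w1 w2 w3.
- by rewrite !last_cat /= tail_last.
- by move=> z; rewrite !mem_cat !inE => /or3P[->|->|/tail_sub ->]; rewrite ?orbT.
- by rewrite !size_cat /= ltn_add2l ltnS.
Qed.

(* A shortest walk is chordless: every walk contains a chordless walk with
   the same ends. *)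
Lemma chordless_subwalk x p : path e x p ->
  exists p', [/\ last x p' = last x p, {subset p' <= p} & chordless e x p'].
Proof.
move=> walk_p.
have [q [walk_q last_q sub_q] q_min] :=
  @ex_minimal _ (fun q => [/\ path e x q, last x q = last x p & {subset q <= p}])
              size p (And3 walk_p erefl (fun z zp => zp)).
have no_shortcut s1 a t t' : x :: q = s1 ++ a :: t -> (path e a t -> path e a t') ->
    last a t' = last a t -> {subset t' <= t} -> size t' < size t -> False.
  move=> E tail tail_last tail_sub tail_size.
  have [q' [walk' last' sub' size']] := shortcut E walk_q tail tail_last tail_sub tail_size.
  have /q_min : [/\ path e x q', last x q' = last x p & {subset q' <= p}].
    by split=> // [|z /sub'/sub_q]; rewrite ?last'.
  by rewrite leqNgt size'.
have uniq_q : uniq (x :: q).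
  apply/negPn/negP => /not_uniq_split[s1 [a [s2 [s3 E]]]].
  apply: (no_shortcut _ _ _ s3 E).
  - by rewrite cat_path /= => /and3P[].
  - by rewrite last_cat.
  - by move=> z z3; rewrite mem_cat inE z3 !orbT.
  - by rewrite size_cat /= leq_addl.
have edge_step s1 a s2 b s3 : x :: q = s1 ++ a :: s2 ++ b :: s3 -> e a b ->
    (a, b) \in steps x q.
  case: s2 => [|c s2] E ab; first exact: steps_consec E.
  exfalso; apply: (no_shortcut _ _ _ (b :: s3) E).
  - by rewrite cat_path => /andP[_]; rewrite /= ab => /andP[].
  - by rewrite last_cat.
  - by move=> z zs; rewrite mem_cat zs orbT.
  - by rewrite size_cat /= addSn ltnS leq_addl.
exists q; split=> //; split=> // u v uq vq; apply/idP/idP => [uv|]; last first.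
  exact: path_linked.
have u_ne_v : u != v by apply: contraTneq uv => ->; rewrite e_irr.
have [s1 [s2 [s3 [E|E]]]] := split2 uq vq u_ne_v.
  by rewrite /linked (edge_step _ _ _ _ _ E uv).
by rewrite /linked (edge_step _ _ _ _ _ E) ?orbT // e_sym.
Qed.

End ShortestWalk.

Section InducedStructures.
Variables (T : finType) (g : rel T).

Lemma chordless_ipath x p : chordless g x p -> ipath g (x :: p).
Proof.
move=> [U adj]; split=> // x0 i j ip jp.
by rewrite !(set_nth_default x) // adj ?mem_nth // /linked !steps_nth // orbC.
Qed.

Lemma chordless_path_from x y A :
  chordless g x (rcons A y) -> path_from g x y (x :: rcons A y).
Proof.
by move=> ch; split; [exact: chordless_ipath | rewrite /= last_rcons].
Qed.

Lemma hole_of x p : uniq (x :: p) -> 4 <= size (x :: p) ->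
  {in x :: p &, g =2 linked x (rcons p x)} -> hole g (x :: p).
Proof.
move=> U size4 adj; split=> //; split=> // x0 i j ip jp.
by rewrite !(set_nth_default x) // adj ?mem_nth // /linked !steps_cycle_nth // orbC.
Qed.

End InducedStructures.

Section Theta.
Variables (T : finType) (g : rel T) (x y : T) (A B : seq T).
Hypothesis g_sym : symmetric g.
Hypotheses (chA : chordless g x (rcons A y)) (chB : chordless g x (rcons B y)).
Hypotheses (A_nil : A != [::]) (B_nil : B != [::]).
Hypotheses (AB_disj : {in A, forall z, z \notin B})
           (AB_free : {in A & B, forall u v, ~~ g u v}).

Local Notation PA := (x :: rcons A y).
Local Notation PB := (x :: rcons B y).
Local Notation cyc := (x :: A ++ y :: rev B).

Lemma mem_cyc z : (z \in cyc) = [|| z == x, z == y, z \in A | z \in B].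
Proof. by rewrite inE mem_cat inE mem_rev; congr (_ || _); rewrite orbCA. Qed.

Lemma A_out z : z \in A -> [&& z != x, z != y & z \notin B].
Proof.
have /and4P[_ xA yA _] : [&& x != y, x \notin A, y \notin A & uniq A].
  by rewrite -uniq_xy; case: chA.
move=> zA; apply/and3P; split; last exact: AB_disj.
  by apply: contraNneq xA => <-.
by apply: contraNneq yA => <-.
Qed.

Lemma B_out z : z \in B -> [&& z != x, z != y & z \notin A].
Proof.
have /and4P[_ xB yB _] : [&& x != y, x \notin B, y \notin B & uniq B].
  by rewrite -uniq_xy; case: chB.
move=> zB; apply/and3P; split.
- by apply: contraNneq xB => <-.
- by apply: contraNneq yB => <-.
- by apply: contraL zB; apply: AB_disj.
Qed.

Lemma theta_inter : V PA :&: V PB = [set x; y].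
Proof.
apply/setP => z; rewrite in_setI /V !in_set !mem_xy !inE.
have [/A_out/and3P[/negPf-> /negPf-> /negPf->] //|_] := boolP (z \in A).
have [/B_out/and3P[/negPf-> /negPf-> _] //|_] := boolP (z \in B).
by rewrite !orbF andbb.
Qed.

Lemma linked_cyc u v :
  linked x (rcons (A ++ y :: rev B) x) u v =
  linked x (rcons A y) u v || linked x (rcons B y) u v.
Proof.
have -> : rcons (A ++ y :: rev B) x = rcons A y ++ rcons (rev B) x.
  by rewrite rcons_cat cat_rcons.
rewrite /linked /steps pairmap_cat last_rcons -/(steps _ _) -/(steps _ _).
rewrite !mem_cat !mem_steps_rev orbACA.
by congr (_ || _); rewrite orbC.
Qed.

Lemma cyc_notA z : z \in cyc -> z \notin PA -> z \in B.
Proof. by rewrite mem_cyc mem_xy => /or4P[zx|zy|zA|//]; rewrite ?zx ?zy ?zA ?orbT. Qed.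

Lemma cyc_notB z : z \in cyc -> z \notin PB -> z \in A.
Proof. by rewrite mem_cyc mem_xy => /or4P[zx|zy|//|zB]; rewrite ?zx ?zy ?zB ?orbT. Qed.

Lemma cyc_adjacency :
  {in cyc &, forall u v, g u v = linked x (rcons A y) u v || linked x (rcons B y) u v}.
Proof.
move=> u v u_c v_c.
have [/andP[uA vA] | nA] := boolP ((u \in PA) && (v \in PA)).
  rewrite -chA.2 //; case lB: (linked x (rcons B y) u v); rewrite ?orbF ?orbT //.
  by have /andP[uB vB] := linked_mem lB; rewrite chB.2 // lB.
have [/andP[uB vB] | nB] := boolP ((u \in PB) && (v \in PB)).
  rewrite -chB.2 //; case lA: (linked x (rcons A y) u v); rewrite ?orbF ?orbT //.
  by have /andP[uA vA] := linked_mem lA; rewrite chA.2 // lA.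
rewrite (contraNF (@linked_mem _ _ _ _ _) nA) (contraNF (@linked_mem _ _ _ _ _) nB).
apply/negbTE; move: nA; rewrite negb_and => /orP[uA | vA].
- have uB := cyc_notA u_c uA.
  have vA : v \in A.
    apply/(cyc_notB v_c)/negP => vB; move/negP: nB; apply.
    by rewrite vB andbT mem_xy uB !orbT.
  by rewrite g_sym; apply: AB_free.
- have vB := cyc_notA v_c vA.
  have uA : u \in A.
    apply/(cyc_notB u_c)/negP => uB; move/negP: nB; apply.
    by rewrite uB mem_xy vB !orbT.
  exact: AB_free.
Qed.

Lemma theta_hole : induces_hole g (V PA :|: V PB).
Proof.
exists cyc; split.
  apply: hole_of.
  - rewrite -cat_rcons -cat_cons cat_uniq rev_uniq (proj1 chA).
    have /and4P[_ _ _ ->] : [&& x != y, x \notin B, y \notin B & uniq B].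
      by rewrite -uniq_xy; case: chB.
    rewrite andbT; apply/hasPn => z; rewrite mem_rev mem_xy.
    by case/B_out/and3P=> /negPf-> /negPf-> /negPf->.
  - have sA : 0 < size A by rewrite lt0n size_eq0.
    have sB : 0 < size B by rewrite lt0n size_eq0.
    by rewrite /= size_cat /= size_rev addnS !ltnS (leq_add sA sB).
  - by move=> u v u_c v_c; rewrite linked_cyc cyc_adjacency.
apply/setP => z; rewrite in_setU /V !in_set mem_cyc !mem_xy.
by case: (z == x); case: (z == y).
Qed.

End Theta.

Section Components.
Variables (T : finType) (g : rel T) (C : {set T}).
Hypothesis g_sym : symmetric g.

Local Notation gC := (rel_minus g C).

Lemma rel_minus_sym : symmetric gC.
Proof. by move=> a b; rewrite /rel_minus /= g_sym andbAC. Qed.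

Local Notation gC_csym := (sym_connect_sym rel_minus_sym).

Lemma comp_notC D u : is_component g C D -> u \in D -> u \notin C.
Proof.
case=> v [vC ->]; rewrite inE => /connectP[p vp ->] {u}.
by elim: p v vC vp => //= a p IH v _ /andP[/andP[_ aC] ap]; apply: IH.
Qed.

Lemma comp_connect D u z : is_component g C D -> u \in D -> connect gC u z -> z \in D.
Proof. by case=> v [_ ->]; rewrite !inE => vu; apply: connect_trans. Qed.

Lemma comp_closed D u w : is_component g C D -> u \in D -> w \notin C -> g u w -> w \in D.
Proof.
move=> D_comp uD wC uw; apply: (comp_connect D_comp uD); apply: connect1.
by rewrite /rel_minus /= uw (comp_notC D_comp uD) wC.
Qed.

Lemma comp_connected D u w : is_component g C D -> u \in D -> w \in D -> connect gC u w.
Proof.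
by case=> v [_ ->]; rewrite !inE => vu vw; rewrite -(same_connect gC_csym vu).
Qed.

Lemma comp_eq D1 D2 z : is_component g C D1 -> is_component g C D2 ->
  z \in D1 -> z \in D2 -> D1 = D2.
Proof.
case=> v1 [_ ->]; case=> v2 [_ ->]; rewrite !inE => v1z v2z.
by apply/setP => w; rewrite !inE (same_connect gC_csym v1z) (same_connect gC_csym v2z).
Qed.

Lemma comp_disjoint D1 D2 z : is_component g C D1 -> is_component g C D2 ->
  D1 != D2 -> z \in D1 -> z \notin D2.
Proof.
move=> D1_comp D2_comp D12 zD1.
by apply: contraNN D12 => zD2; rewrite (comp_eq D1_comp D2_comp zD1 zD2).
Qed.

Lemma comp_anticomplete D1 D2 u w : is_component g C D1 -> is_component g C D2 ->
  D1 != D2 -> u \in D1 -> w \in D2 -> ~~ g u w.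
Proof.
move=> D1_comp D2_comp D12 uD1 wD2; apply/negP => uw.
have wD1 := comp_closed D1_comp uD1 (comp_notC D2_comp wD2) uw.
by rewrite (negPf (comp_disjoint D1_comp D2_comp D12 wD1)) in wD2.
Qed.

Hypothesis g_irr : irreflexive g.

Lemma full_component_path D x y : is_full_component g C D ->
  x \in C -> y \in C -> x != y -> ~~ g x y ->
  exists A, [/\ A != [::], {subset A <= D} & chordless g x (rcons A y)].
Proof.
move=> [D_comp D_full] xC yC xy nxy.
move: xC yC; rewrite -D_full !inE.
move=> /andP[_ /existsP[u /andP[uD ux]]] /andP[_ /existsP[w /andP[wD wy]]].
have /connectP[q uq w_last] := comp_connected D_comp uD wD.
have qD : {subset q <= D}.
  by move=> z zq; apply: comp_connect D_comp uD (path_connect uq _); rewrite inE zq orbT.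
have walk : path g x (u :: rcons q y).
  rewrite /= g_sym ux rcons_path -w_last wy andbT.
  by apply: sub_path uq => a b /andP[/andP[]].
have [p [last_p sub_p ch]] := chordless_subwalk g_sym g_irr walk.
rewrite /= last_rcons in last_p.
case/lastP: p last_p sub_p ch => [/= yx|A z]; first by rewrite yx eqxx in xy.
rewrite last_rcons => -> {z} sub_p ch; exists A; split=> //.
- apply: contraNneq nxy => A0; rewrite A0 in ch.
  by rewrite ch.2 ?inE ?eqxx ?orbT // /linked /steps /= inE eqxx.
- move=> z zA; have /sub_p : z \in rcons A y by rewrite mem_rcons inE zA orbT.
  rewrite inE mem_rcons inE => /or3P[/eqP-> // | /eqP zy | /qD //].
  by case: ch; rewrite uniq_xy -zy zA /= !andbF.
Qed.

Lemma two_components_hole D1 D2 x y A1 A2 :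
  is_component g C D1 -> is_component g C D2 -> D1 != D2 ->
  A1 != [::] -> {subset A1 <= D1} -> chordless g x (rcons A1 y) ->
  A2 != [::] -> {subset A2 <= D2} -> chordless g x (rcons A2 y) ->
  V (x :: rcons A1 y) :&: V (x :: rcons A2 y) = [set x; y] /\
  induces_hole g (V (x :: rcons A1 y) :|: V (x :: rcons A2 y)).
Proof.
move=> D1_comp D2_comp D12 A1_nil A1D ch1 A2_nil A2D ch2.
have disj : {in A1, forall z, z \notin A2}.
  by move=> z /A1D zD1; apply: contra (comp_disjoint D1_comp D2_comp D12 zD1) => /A2D.
have free : {in A1 & A2, forall u v, ~~ g u v}.
  by move=> u v /A1D uD1 /A2D vD2; apply: comp_anticomplete D1_comp D2_comp D12 uD1 vD2.
split; first exact: theta_inter ch1 ch2 disj.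
exact: theta_hole g_sym ch1 ch2 A1_nil A2_nil disj free.
Qed.

Lemma three_components_theta D1 D2 D3 x y :
  is_full_component g C D1 -> is_full_component g C D2 -> is_full_component g C D3 ->
  D1 != D2 -> D1 != D3 -> D2 != D3 ->
  x \in C -> y \in C -> x != y -> ~~ g x y -> has_theta g.
Proof.
move=> D1_full D2_full D3_full D12 D13 D23 xC yC xy nxy.
have [A1 [A1_nil A1D ch1]] := full_component_path D1_full xC yC xy nxy.
have [A2 [A2_nil A2D ch2]] := full_component_path D2_full xC yC xy nxy.
have [A3 [A3_nil A3D ch3]] := full_component_path D3_full xC yC xy nxy.
have [i12 h12] := two_components_hole D1_full.1 D2_full.1 D12 A1_nil A1D ch1 A2_nil A2D ch2.
have [i13 h13] := two_components_hole D1_full.1 D3_full.1 D13 A1_nil A1D ch1 A3_nil A3D ch3.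
have [i23 h23] := two_components_hole D2_full.1 D3_full.1 D23 A2_nil A2D ch2 A3_nil A3D ch3.
have pf1 := chordless_path_from ch1.
have pf2 := chordless_path_from ch2.
have pf3 := chordless_path_from ch3.
exists x, y, (x :: rcons A1 y), (x :: rcons A2 y), (x :: rcons A3 y).
by do 10!(split; first by []).
Qed.

End Components.

Lemma not_clique_pair (T : finType) (g : rel T) (C : {set T}) :
  ~ clique g C -> exists x y, [/\ x \in C, y \in C, x != y & ~~ g x y].
Proof.
move=> not_clique; apply: NNPP => none; apply: not_clique => a b aC bC ab.
by apply/negPn/negP => nab; apply: none; exists a, b.
Qed.

Theorem lemma3p2 (T : finType) (g : rel T) (C : {set T}) :
  symmetric g -> irreflexive g ->
  in_class_C g -> minimal_separator g C -> ~ clique g C ->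
  exists D1 D2 : {set T},
    D1 != D2 /\ is_full_component g C D1 /\ is_full_component g C D2 /\
    forall D : {set T}, is_full_component g C D -> D = D1 \/ D = D2.
Proof.
move=> g_sym g_irr [no_theta _] [L [R [LR [L_comp [R_comp [L_full R_full]]]]]] not_clique.
have [x [y [xC yC xy nxy]]] := not_clique_pair not_clique.
exists L, R; do 3!split=> //.
move=> D D_full; have [->|DL] := eqVneq D L; first by left.
have [->|DR] := eqVneq D R; first by right.
have LD : L != D by rewrite eq_sym.
have RD : R != D by rewrite eq_sym.
case: no_theta; apply: (three_components_theta g_sym g_irr (conj L_comp L_full)
  (conj R_comp R_full) D_full LR LD RD xC yC xy nxy).
Qed.
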